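(* Let $s\ge3$ and $k\ge1$, and let $\Gamma$ be a connected subgraph of $P_{s,k}$ with $n=|\mathcal{E}\Gamma|$ edges. Suppose there exist an edge transitive automorphism $\psi\in\mathrm{Aut}(P_{s,k})$ and an edge $e\in\mathcal{E}\Gamma$ such that $\{e,\psi(e),\dots,\psi^{n-1}(e)\}=\mathcal{E}\Gamma$ (as unoriented edges). Let $\mathfrak{s}_0,\dots,\mathfrak{s}_{s-1}$ be the sides of $P_{s,k}$, and write $n=sm+t$ with $m\in\{1,\dots,k\}$ and $t\in\{0,\dots,s-1\}$. Then (i) exactly $t$ sides satisfy $|\mathfrak{s}_i\cap\mathcal{E}\Gamma|=m+1$, and (ii) the remaining $s-t$ sides satisfy $|\mathfrak{s}_i\cap\mathcal{E}\Gamma|=m$.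
   Context: A graph is a finite 1-dimensional CW complex (multiple edges and loops allowed). A graph automorphism is a bijection of vertices together with a bijection of oriented edges (possibly reversing orientation) compatible with endpoints and edge reversal; it is edge transitive if the group it generates acts transitively on the unoriented edges. The $s$-gonal graph of depth $k$, $P_{s,k}$, has vertices $v_0,\dots,v_{s-1}$ and edges $e_i^j$ ($0\le i\le s-1$, $1\le j\le k$) with $e_i^j$ joining $v_i$ to $v_{i+1}$ (indices mod $s$). The sides of $P_{s,k}$ are the sets $\mathfrak{s}_i=\{e_i^j:1\le j\le k\}$. *)

From mathcomp Require Import all_boot all_fingroup.
Set Implicit Arguments. Unset Strict Implicit. Unset Printing Implicit Defensive.

(* Vertices: 'I_s (v_i).  Unoriented edges: 'I_s * 'I_k, the pair (i, j)
   standing for e_i^{j+1}, joining v_i to v_{i+1 mod s}.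
   Oriented edges: (edge, b); b = false is the orientation v_i -> v_{i+1},
   b = true the reverse one. *)
Definition pedge (s k : nat) : finType := ('I_s * 'I_k)%type.
Definition poedge (s k : nat) : finType := ('I_s * 'I_k * bool)%type.

Definition orig (s k : nat) (x : poedge s k) : 'I_s :=
  if x.2 then ordS x.1.1 else x.1.1.
Definition orev (s k : nat) (x : poedge s k) : poedge s k := (x.1, ~~ x.2).
Definition term (s k : nat) (x : poedge s k) : 'I_s := orig (orev x).

Definition is_aut (s k : nat) (fV : {perm 'I_s}) (fE : {perm poedge s k}) : Prop :=
  (forall x, fE (orev x) = orev (fE x)) /\
  (forall x, orig (fE x) = fV (orig x)) /\
  (forall x, term (fE x) = fV (term x)).

Definition uact (s k : nat) (g : {perm poedge s k}) (e : pedge s k) : pedge s k :=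
  (g (e, false)).1.

Definition edge_transitive (s k : nat) (fE : {perm poedge s k}) : Prop :=
  forall e1 e2 : pedge s k, exists2 g, g \in <[fE]>%g & uact g e1 = e2.

Definition endpoints_in (s k : nat) (V : {set 'I_s}) (E : {set pedge s k}) : Prop :=
  forall e, e \in E -> (e.1 \in V) && (ordS e.1 \in V).

Definition adj (s k : nat) (E : {set pedge s k}) : rel 'I_s :=
  fun x y => [exists e in E, ((e.1 == x) && (ordS e.1 == y))
                          || ((e.1 == y) && (ordS e.1 == x))].

Definition connected_sub (s k : nat) (V : {set 'I_s}) (E : {set pedge s k}) : Prop :=
  V != set0 /\ forall x y, x \in V -> y \in V -> connect (adj E) x y.

Definition side (s k : nat) (i : 'I_s) : {set pedge s k} := [set e | e.1 == i].

(* An automorphism of P_{s,k} permutes the sides, and the induced permutation tau of 'I_s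
   is a single s-cycle because the automorphism is edge transitive.  The side of psi^p(e)
   is tau^p of the side of e, and the n = sm + t edges psi^p(e), p < n, are distinct; so
   walking n steps around the s-cycle visits every side m times and the first t sides of
   the walk once more. *)
From mathcomp Require Import all_boot all_fingroup.
From mathcomp Require Import zify.

Set Implicit Arguments.
Unset Strict Implicit.
Unset Printing Implicit Defensive.

Lemma ordS2_neq n (a : 'I_n) : 2 < n -> ordS (ordS a) != a.
Proof.
move=> n_gt2; apply/eqP => /(congr1 val) /=; rewrite -addn1 modnDml.
have a_lt := ltn_ord a; case: (ltnP (a.+1 + 1) n) => [lt_n | ge_n].
  by rewrite modn_small //; lia.
by rewrite -(subnK ge_n) modnDr modn_small; lia.
Qed.

Lemma traject_mkseq (T : Type) (f : T -> T) x n :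
  traject f x n = mkseq (fun p => iter p f x) n.
Proof. by elim: n => // n IHn; rewrite trajectSr mkseqS IHn. Qed.

Lemma card_ord_preim_count (T : eqType) n (h : nat -> T) y :
  #|[set p : 'I_n | h p == y]| = count_mem y (mkseq h n).
Proof.
rewrite cardsE cardE /enum_mem size_filter /mkseq -val_enum_ord !count_map.
by apply: eq_count.
Qed.

Lemma card_imset_ord_fiber (T : finType) (U : eqType) n (F : 'I_n -> T)
    (g : T -> U) (h : nat -> U) y :
  #|[set F p | p : 'I_n]| = n -> (forall p : 'I_n, g (F p) = h p) ->
  #|[set z in [set F p | p : 'I_n] | g z == y]| = count_mem y (mkseq h n).
Proof.
move=> cardF gF.
have /imset_injP F_inj : #|[set F p | p : 'I_n]| == #|'I_n|.
  by rewrite cardF card_ord.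
have -> : [set z in [set F p | p : 'I_n] | g z == y] = F @: [set p : 'I_n | h p == y].
  apply/setP => z; rewrite inE; apply/andP/imsetP => [[/imsetP[p _ ->] gpy] | [p]].
    by exists p; rewrite // inE -gF.
  by rewrite inE => hpy ->; rewrite imset_f // gF.
rewrite card_in_imset ?card_ord_preim_count //.
by move=> p q _ _; apply: F_inj; rewrite inE.
Qed.

Section TransitiveCycle.
Variables (T : finType) (f : T -> T) (x : T).
Hypotheses (f_inj : injective f) (f_trans : forall y, fconnect f x y).

Lemma order_transitive : fingraph.order f x = #|T|.
Proof. by apply: eq_card => y; rewrite inE f_trans. Qed.

Lemma iter_card_transitive : iter #|T| f x = x.
Proof. by rewrite -order_transitive iter_order. Qed.

Lemma traject_uniq_transitive t : t <= #|T| -> uniq (traject f x t).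
Proof.
move=> t_le; rewrite -(take_traject _ _ t_le) take_uniq //.
by rewrite -order_transitive orbit_uniq.
Qed.

Lemma count_traject_transitive m t y : t <= #|T| ->
  count_mem y (traject f x (#|T| * m + t)) = m + (y \in traject f x t).
Proof.
move=> t_le; elim: m => [|m IHm].
  by rewrite muln0 add0n count_uniq_mem ?traject_uniq_transitive.
rewrite mulnS -addnA trajectD count_cat iter_card_transitive IHm.
rewrite count_uniq_mem ?traject_uniq_transitive //.
by rewrite -order_transitive -fconnect_orbit f_trans.
Qed.

Lemma card_count_traject_transitive m t : t <= #|T| ->
  #|[set y | count_mem y (traject f x (#|T| * m + t)) == m.+1]| = t /\
  #|[set y | count_mem y (traject f x (#|T| * m + t)) == m]| = #|T| - t.
Proof.
move=> t_le.
have visited : [set y | count_mem y (traject f x (#|T| * m + t)) == m.+1]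
             = [set y in traject f x t].
  apply/setP => y; rewrite !inE count_traject_transitive //.
  by case: (y \in _); rewrite /= ?addn0 ?addn1 ?eqxx ?ltn_eqF.
have unvisited : [set y | count_mem y (traject f x (#|T| * m + t)) == m]
               = ~: [set y in traject f x t].
  apply/setP => y; rewrite !inE count_traject_transitive //.
  by case: (y \in _); rewrite /= ?addn0 ?addn1 ?eqxx ?gtn_eqF.
have card_visited : #|[set y in traject f x t]| = t.
  rewrite cardsE -[RHS](size_traject f x t).
  exact/card_uniqP/traject_uniq_transitive.
split; first by rewrite visited.
by rewrite unvisited -(cardsC [set y in traject f x t]) card_visited addKn.
Qed.

End TransitiveCycle.

Section SideMap.
Variables (s k : nat) (fV : {perm 'I_s}) (fE : {perm poedge s k}).
Hypotheses (s_ge3 : 3 <= s) (fE_aut : is_aut fV fE).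

(* The side i joins v_i and v_(i+1); its image joins fV v_i and fV v_(i+1), so it is side
   fV i or side fV (i+1), and as s >= 3 only one of the two orientations can match. *)
Definition side_map (i : 'I_s) : 'I_s :=
  if ordS (fV i) == fV (ordS i) then fV i else fV (ordS i).

Lemma side_aut x : (fE x).1.1 = side_map x.1.1.
Proof.
case: x => [[i j] b].
have [fE_rev [fE_orig fE_term]] := fE_aut.
suff side_fwd : (fE (i, j, false)).1.1 = side_map i.
  by case: b => //; rewrite -[(_, true)]/(orev (i, j, false)) fE_rev.
move: (fE_orig (i, j, false)) (fE_term (i, j, false)).
rewrite /term /orig /orev /side_map /=.
case: (fE _) => [[y j'] [|]] /= <- <-; last by rewrite eqxx.
by rewrite (negbTE (ordS2_neq _ s_ge3)).
Qed.

Lemma side_aut_expg p x : ((fE ^+ p)%g x).1.1 = iter p side_map x.1.1.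
Proof.
elim: p => [|p IHp]; first by rewrite expg0 perm1.
by rewrite expgSr permM side_aut IHp.
Qed.

Hypothesis k_gt0 : 0 < k.

Lemma side_map_inj : injective side_map.
Proof.
have side_map_order i : iter #[fE]%g side_map i = i.
  by have := side_aut_expg #[fE]%g (i, Ordinal k_gt0, false); rewrite expg_order perm1.
apply: (can_inj (g := iter #[fE]%g.-1 side_map)) => i.
by rewrite -iterSr prednK ?order_gt0.
Qed.

Lemma edge_transitive_side_map :
  edge_transitive fE -> forall i j, fconnect side_map i j.
Proof.
move=> fE_tr i j.
have [_ /cycleP[p ->] /(congr1 fst)] := fE_tr (i, Ordinal k_gt0) (j, Ordinal k_gt0).
by rewrite /uact side_aut_expg /= => <-; apply: fconnect_iter.
Qed.

End SideMap.

Theorem lemma7p3 (s k : nat) (hs : 3 <= s) (hk : 1 <= k)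
  (V : {set 'I_s}) (E : {set pedge s k})
  (hsub : endpoints_in V E) (hconn : connected_sub V E)
  (fV : {perm 'I_s}) (fE : {perm poedge s k})
  (haut : is_aut fV fE) (htr : edge_transitive fE)
  (e : pedge s k) (he : e \in E)
  (horb : E = [set uact (fE ^+ i)%g e | i : 'I_#|E|])
  (m t : nat) (hm1 : 1 <= m) (hmk : m <= k) (ht : t < s)
  (hn : #|E| = s * m + t) :
  #|[set i : 'I_s | #|side k i :&: E| == m.+1]| = t /\
  #|[set i : 'I_s | #|side k i :&: E| == m]| = s - t.
Proof.
have tau_inj := side_map_inj hs haut hk.
have tau_trans := edge_transitive_side_map hs haut hk htr e.1.
have card_side i : #|side k i :&: E| = count_mem i (traject (side_map fV) e.1 #|E|).
  have -> : side k i :&: E = [set z in E | z.1 == i] by apply/setP => z; rewrite !inE andbC.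
  rewrite {1}horb traject_mkseq; apply: card_imset_ord_fiber; first by rewrite -horb.
  by move=> p; rewrite /uact (side_aut_expg hs haut).
have same_sets c : [set i | #|side k i :&: E| == c]
                 = [set i | count_mem i (traject (side_map fV) e.1 #|E|) == c].
  by apply/setP => i; rewrite !inE card_side.
have t_le : t <= #|'I_s| by rewrite card_ord ltnW.
rewrite !same_sets hn.
by have := card_count_traject_transitive tau_inj tau_trans m t_le; rewrite card_ord.
Qed.
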